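(* Assume AS.1 and AS.3, let $\omega\in(0,1)$ and consider a realization of the SKOFFAR$p$ algorithm. Let $$k_*=\left\lceil\frac{2L_p\,\epsilon^{-(p+1)/p}}{\vartheta\nu_0\,\omega^{(p+1)/p}}\right\rceil,$$ and let $k_0<N_1(\epsilon)$ be an iteration index such that at least $k_*$ of the iterations with indices $0,\dots,k_0-1$ are $\omega$-true. Then $k_1$ is finite, $k_1\le k_0$, and $\sigma_k\ge 2L_p$ for all $k\ge k_1$.
   Context: Let $f:\mathbb{R}^n\to\mathbb{R}$ and $p\ge1$ an integer; $\|\cdot\|$ is the Euclidean norm for vectors, the spectral norm for matrices and the induced (subordinate) norm for tensors; $T[d]^i$ denotes a symmetric $i$-tensor applied to $i$ copies of $d$. Assumptions: AS.1: $f$ is $p$ times continuously differentiable on $\mathbb{R}^n$. AS.3: there is $L_p\ge 0$ with $\|\nabla^p f(x)-\nabla^p f(y)\|\le L_p\|x-y\|$ for all $x,y$. For $x,s\in\mathbb{R}^n$ let $T_{f,p}(x,s)=f(x)+\sum_{i=1}^p\frac{1}{i!}\nabla^i f(x)[s]^i$. Write $g_k=\nabla f(x_k)$. The SKOFFAR$p$ algorithm: given $x_0\in\mathbb{R}^n$, $\nu_0>0$, $\epsilon\in(0,1]$, $\theta>1$, $\mu_{-1}\ge 0$, $\vartheta\in(0,1)$ and a fixed distribution $\mathcal S$ of $\ell\times n$ random matrices ($\ell<n$), for $k=0,1,2,\dots$: (i) if $k=0$ set $\sigma_0=\nu_0$; otherwise choose $\sigma_k\in[\vartheta\nu_k,\max(\nu_k,\mu_k)]$,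 where $\mu_k=\max\Big[\mu_{k-1},\frac{\|S_{k-1}g_k\|-\|\nabla_{\hat s}\widehat T_{k-1}(\hat s_{k-1})\|}{\kappa_{S,k-1}\|s_{k-1}\|^p}\Big]$ for some number $\kappa_{S,k-1}\ge\|S_{k-1}\|$; (ii) draw $S_k\in\mathbb{R}^{\ell\times n}$ from $\mathcal S$, define for $\hat s\in\mathbb{R}^\ell$ the sketched Taylor model $\widehat T_k(\hat s)=T_{f,p}(x_k,S_k^T\hat s)$ and the sketched model $\widehat m_k(\hat s)=\widehat T_k(\hat s)+\frac{\sigma_k}{(p+1)!}\|S_k^T\hat s\|^{p+1}$, and compute $\hat s_k\in\mathbb{R}^\ell$ with $\widehat m_k(\hat s_k)<\widehat m_k(0)$ and $\|\nabla_{\hat s}\widehat T_k(\hat s_k)\|\le\theta\frac{\sigma_k}{p!}\|S_k^T\hat s_k\|^{p-1}\|S_kS_k^T\hat s_k\|$; set $s_k=S_k^T\hat s_k$; (iii) set $x_{k+1}=x_k+s_k$ and $\nu_{k+1}=\nu_k+\nu_k\|s_k\|^{p+1}$. $N_1(\epsilon)=\min\{k\in\mathbb N:\|g_k\|\le\epsilon\}$ (possibly $+\infty$). Define $k_1=\inf\{k\ge1:\nu_k\ge 2L_p/\vartheta\}$. For $\omega\in(0,1)$, an iteration $k\in\{0,\dots,N_1(\epsilon)-2\}$ is called $\omega$-true if $\|s_k\|^p\ge\omega\epsilon$. *)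

From HB Require Import structures.
From mathcomp Require Import all_boot all_order all_algebra.
From mathcomp Require Import all_classical all_reals all_analysis.
Set Implicit Arguments. Unset Strict Implicit. Unset Printing Implicit Defensive.
Import Order.TTheory GRing.Theory Num.Theory.
Import numFieldNormedType.Exports.
Local Open Scope ring_scope.

Section Defs.
Variable R : realType.

Definition enorm (m : nat) (v : 'cV[R]_m) : R := Num.sqrt (\sum_(i < m) v i 0 ^+ 2).

(* iterated directional derivative: dder f [:: d1; ...; di] x = nabla^i f(x)[d1,...,di] *)
Fixpoint dder (m : nat) (f : 'cV[R]_m -> R) (ds : seq 'cV[R]_m) : 'cV[R]_m -> R :=
  match ds with
  | [::] => f
  | d :: ds' => fun x => 'D_d (dder f ds') x
  end.

Definition Cp (m : nat) (f : 'cV[R]_m -> R) (p : nat) : Prop :=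
  (forall ds : seq 'cV[R]_m, (size ds < p)%N -> forall x, differentiable (dder f ds) x) /\
  (forall ds : seq 'cV[R]_m, size ds = p -> continuous (dder f ds)).

(* AS.3 : || nabla^p f(x) - nabla^p f(y) || <= L ||x - y||, with the induced tensor norm
   (sup over unit vectors d1..dp of |(nabla^p f(x) - nabla^p f(y))[d1,...,dp]|) *)
Definition AS3 (m : nat) (f : 'cV[R]_m -> R) (p : nat) (L : R) : Prop :=
  forall x y (ds : seq 'cV[R]_m), size ds = p -> all (fun d => enorm d == 1) ds ->
    `|dder f ds x - dder f ds y| <= L * enorm (x - y).

Definition grad (m : nat) (F : 'cV[R]_m -> R) (x : 'cV[R]_m) : 'cV[R]_m :=
  \col_(i < m) 'D_(delta_mx i 0) F x.

Definition taylor (m : nat) (f : 'cV[R]_m -> R) (p : nat) (x s : 'cV[R]_m) : R :=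
  f x + \sum_(1 <= i < p.+1) (i`!%:R)^-1 * dder f (nseq i s) x.

Definition skT (m l : nat) (f : 'cV[R]_m -> R) (p : nat) (x : 'cV[R]_m)
  (S : 'M[R]_(l, m)) (sh : 'cV[R]_l) : R := taylor f p x (S^T *m sh).

Definition skm (m l : nat) (f : 'cV[R]_m -> R) (p : nat) (x : 'cV[R]_m)
  (S : 'M[R]_(l, m)) (sigma : R) (sh : 'cV[R]_l) : R :=
  skT f p x S sh + sigma / (p.+1)`!%:R * enorm (S^T *m sh) ^+ p.+1.

Definition skoffar_run (m l : nat) (f : 'cV[R]_m -> R) (p : nat)
  (nu0 theta mum1 vth : R)
  (x : nat -> 'cV[R]_m) (nu sigma mu kappa : nat -> R)
  (S : nat -> 'M[R]_(l, m)) (sh : nat -> 'cV[R]_l) : Prop :=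
  let s k := (S k)^T *m sh k in
  [/\ [/\ nu 0%N = nu0, sigma 0%N = nu0 &
      (* mu 0 stands for mu_0, taken equal to mu_{-1} *)
      mu 0%N = mum1],
      (forall k, (0 < k)%N ->
         kappa k.-1 >= 0 /\
         (forall v : 'cV[R]_m, enorm (S k.-1 *m v) <= kappa k.-1 * enorm v) /\
         mu k = Num.max (mu k.-1)
           ((enorm (S k.-1 *m grad f (x k)) - enorm (grad (skT f p (x k.-1) (S k.-1)) (sh k.-1)))
              / (kappa k.-1 * enorm (s k.-1) ^+ p))),
      (forall k, (0 < k)%N -> vth * nu k <= sigma k <= Num.max (nu k) (mu k)) &
      (forall k,
         [/\ skm f p (x k) (S k) (sigma k) (sh k) < skm f p (x k) (S k) (sigma k) 0,
             enorm (grad (skT f p (x k) (S k)) (sh k))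
               <= theta * (sigma k / p`!%:R) * enorm (s k) ^+ p.-1
                  * enorm (S k *m ((S k)^T *m sh k)),
             x k.+1 = x k + s k &
             nu k.+1 = nu k + nu k * enorm (s k) ^+ p.+1])].

End Defs.

From HB Require Import structures.
From mathcomp Require Import all_boot all_order all_algebra.
From mathcomp Require Import all_classical all_reals all_analysis.
From mathcomp Require Import ring.
Set Implicit Arguments. Unset Strict Implicit. Unset Printing Implicit Defensive.
Import Order.TTheory GRing.Theory Num.Theory.
Import numFieldNormedType.Exports.
Local Open Scope ring_scope.

(* The update [nu_{k+1} = nu_k (1 + ||s_k||^(p+1))] makes [nu] grow by at least
   [nu_0 (omega eps)^((p+1)/p)] at every omega-true iteration, so after [k_*] of them
   [nu] has passed [2 L_p / vartheta]; from the first such index on, the lower bound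
   [sigma_k >= vartheta nu_k] gives [sigma_k >= 2 L_p]. *)

Lemma enorm_ge0 (R : realType) (m : nat) (v : 'cV[R]_m) : 0 <= enorm v.
Proof. exact: sqrtr_ge0. Qed.

Lemma powR_le_exprS (R : realType) (p : nat) (y e : R) :
  (0 < p)%N -> 0 < y -> 0 <= e -> y <= e ^+ p ->
  powR y ((p.+1)%:R / p%:R) <= e ^+ p.+1.
Proof.
move=> p_gt0 y_gt0 e_ge0 y_le.
have pR : (p%:R : R) != 0 by rewrite pnatr_eq0 -lt0n.
have -> : e ^+ p.+1 = powR (e ^+ p) ((p.+1)%:R / p%:R).
  by rewrite -!powR_mulrn // -powRrM mulrC divfK.
apply: (ge0_ler_powR (divr_ge0 _ _)) y_le; rewrite ?nnegrE ?exprn_ge0 //.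
exact: ltW.
Qed.

Section MultiplicativeGrowth.
Variables (R : realType) (nu g : nat -> R).
Hypothesis nu0_gt0 : 0 < nu 0%N.
Hypothesis g_ge0 : forall k, 0 <= g k.
Hypothesis nuS : forall k, nu k.+1 = nu k + nu k * g k.

Lemma growth_ge0 k : 0 <= nu k.
Proof.
elim: k => [|k IH]; first exact: ltW.
by rewrite nuS addr_ge0 ?mulr_ge0.
Qed.

Lemma growth_nondecreasing i j : (i <= j)%N -> nu i <= nu j.
Proof.
move=> /subnK <-; elim: (j - i)%N => [|d IH] //.
by rewrite addSn nuS (le_trans IH) // lerDl mulr_ge0 ?growth_ge0.
Qed.

Lemma growth_count (P : pred nat) (c : R) :
  0 <= c -> (forall k, P k -> c <= g k) ->
  forall k, nu 0%N + nu 0%N * c * (count P (iota 0 k))%:R <= nu k.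
Proof.
move=> c_ge0 Pc; elim=> [|k IH]; first by rewrite mulr0 addr0.
rewrite nuS -addn1 iotaD count_cat /= addn0 natrD mulrDr addrA.
apply: lerD => //; case: (boolP (P k)) => Pk /=.
- rewrite mulr1 ler_pM ?(ltW nu0_gt0) ?Pc //.
  by rewrite growth_nondecreasing.
- by rewrite mulr0 mulr_ge0 ?growth_ge0.
Qed.

End MultiplicativeGrowth.

Lemma first_reach (d : Order.disp_t) (T : orderType d) (u : nat -> T) (t : T) (k0 : nat) :
  (0 < k0)%N -> (t <= u k0)%O ->
  exists k1 : nat,
    [/\ (1 <= k1)%N, (t <= u k1)%O,
        (forall k, (1 <= k)%N -> (k < k1)%N -> (u k < t)%O) & (k1 <= k0)%N].
Proof.
move=> k0_gt0 t_le.
have ex : exists k, (0 < k)%N && (t <= u k)%O by exists k0; rewrite k0_gt0.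
case: (ex_minnP ex) => k1 /andP[k1_gt0 t_le1] k1_min.
exists k1; split => //; last by apply: k1_min; rewrite k0_gt0.
move=> k k_gt0 lt_kk1; rewrite ltNge; apply/negP => t_lek.
by have := k1_min k; rewrite k_gt0 t_lek leqNgt lt_kk1 => /(_ isT).
Qed.

(* [k_*] increments of size [nu_0 (omega eps)^a] add up to the threshold [2 L_p / vartheta]. *)
Lemma kstar_scaled (R : realType) (Lp nu0 eps vth omega a : R) :
  0 < nu0 -> 0 < eps -> 0 < vth -> 0 < omega ->
  nu0 * powR (omega * eps) a
    * (2 * Lp * powR eps (- a) / (vth * nu0 * powR omega a)) = 2 * Lp / vth.
Proof.
move=> nu0_gt0 eps_gt0 vth_gt0 om_gt0.
rewrite powRM ?ltW // powRN.
have h1 : powR omega a != 0 by rewrite gt_eqF // powR_gt0.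
have h2 : powR eps a != 0 by rewrite gt_eqF // powR_gt0.
have h3 : nu0 != 0 by rewrite gt_eqF.
have h4 : vth != 0 by rewrite gt_eqF.
by field; rewrite h1 h2 h3 h4.
Qed.

Theorem mainTheorem7 (R : realType) (n l p : nat) (f : 'cV[R]_n -> R) (Lp : R)
  (nu0 eps theta mum1 vth omega : R)
  (x : nat -> 'cV[R]_n) (nu sigma mu kappa : nat -> R)
  (S : nat -> 'M[R]_(l, n)) (sh : nat -> 'cV[R]_l) (k0 : nat) :
  (1 <= p)%N -> (l < n)%N ->
  Cp f p -> 0 <= Lp -> AS3 f p Lp ->
  0 < nu0 -> 0 < eps <= 1 -> 1 < theta -> 0 <= mum1 -> 0 < vth < 1 ->
  0 < omega < 1 ->
  skoffar_run f p nu0 theta mum1 vth x nu sigma mu kappa S sh ->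
  (* k0 < N_1(eps) *)
  (forall j, (j <= k0)%N -> eps < enorm (grad f (x j))) ->
  (0 < k0)%N ->
  (* at least k_* of the iterations 0, ..., k0-1 are omega-true *)
  Num.ceil (2 * Lp * powR eps (- ((p.+1)%:R / p%:R))
              / (vth * nu0 * powR omega ((p.+1)%:R / p%:R)))
    <= (count (fun k =>
          [forall j : 'I_k.+2, eps < enorm (grad f (x j))] &&
          (omega * eps <= enorm ((S k)^T *m sh k) ^+ p)) (iota 0 k0))%:Z ->
  exists k1 : nat,
    [/\ (1 <= k1)%N, 2 * Lp / vth <= nu k1,
        (forall k, (1 <= k)%N -> (k < k1)%N -> nu k < 2 * Lp / vth),
        (k1 <= k0)%N &
        (forall k, (k1 <= k)%N -> 2 * Lp <= sigma k)].
Proof.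
move=> p_gt0 _ _ _ _ nu0_gt0 /andP[eps_gt0 _] _ _ /andP[vth_gt0 _] /andP[om_gt0 _].
case=> [[nuE _ _] _ sigma_bounds step] _ k0_gt0.
set a := (p.+1)%:R / p%:R : R; set P := (fun k => _ && _).
rewrite ceil_le_int => kstar_le.
set g := fun k => enorm ((S k)^T *m sh k) ^+ p.+1.
have nuS k : nu k.+1 = nu k + nu k * g k by have [] := step k.
have g_ge0 k : 0 <= g k by rewrite exprn_ge0 ?enorm_ge0.
have nu_0_gt0 : nu 0%N > 0 by rewrite nuE.
have c_gt0 : 0 < powR (omega * eps) a by rewrite powR_gt0 ?mulr_gt0.
have true_step k : P k -> powR (omega * eps) a <= g k.
  by case/andP=> _; apply: powR_le_exprS; rewrite ?mulr_gt0 ?enorm_ge0.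
have nu_k0 : 2 * Lp / vth <= nu k0.
  apply: le_trans (growth_count nu_0_gt0 g_ge0 nuS (ltW c_gt0) true_step k0).
  rewrite nuE -(kstar_scaled Lp a nu0_gt0 eps_gt0 vth_gt0 om_gt0).
  rewrite -[X in X <= _]add0r; apply: lerD; first exact: ltW.
  by rewrite ler_pM2l ?mulr_gt0.
have [k1 [k1_ge1 nu_k1 k1_first k1_le]] := first_reach k0_gt0 nu_k0.
exists k1; split => // k k1_le_k.
have nu_k : 2 * Lp / vth <= nu k.
  exact: le_trans nu_k1 (growth_nondecreasing nu_0_gt0 g_ge0 nuS k1_le_k).
have [+ _] := andP (sigma_bounds k (leq_trans k1_ge1 k1_le_k)); apply: le_trans.
by move: nu_k; rewrite -(ler_pM2l vth_gt0) mulrC divfK ?gt_eqF.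
Qed.
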